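(* Let $q$ be a prime power, $m\ge1$, and let $\mathcal{A}=\{\alpha^{[0]},\alpha^{[1]},\dots,\alpha^{[m-1]}\}$ be a normal basis of $\mathbb{F}_{q^m}$ over $\mathbb{F}_q$ with dual basis $\mathcal{A}'=\{\alpha'_0,\dots,\alpha'_{m-1}\}$. Let $\mathcal{B}$ be any ordered basis of $\mathbb{F}_{q^m}$ over $\mathbb{F}_q$. Let $f(x)=\sum_{i=0}^{m-1}f_ix^{[i]}$ be a $q$-polynomial over $\mathbb{F}_{q^m}$, and let $F=(F_0,\dots,F_{m-1})^T\in\mathbb{F}_{q^m}^m$ be such that $[F]_{\mathcal{B}}=[f(x)]_{\mathcal{A}}^{\mathcal{B}}$. Writing $F(x)=\sum_{j=0}^{m-1}F_jx^{[j]}$, we have $f_i=F(\alpha'_i)$ for $i=0,\dots,m-1$. In particular, for any ordered basis $\Theta$ of $\mathbb{F}_{q^m}$ over $\mathbb{F}_q$, $[f]_\Theta=[F(x)]_{\mathcal{A}'}^{\Theta}$, where $f=(f_0,\dots,f_{m-1})^T$.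
   Context: $x^{[i]}$ denotes $x^{q^i}$. A normal basis is a basis of the form $\{\alpha^{[0]},\dots,\alpha^{[m-1]}\}$. The dual basis $\{\alpha'_j\}$ of a basis $\{\alpha_i\}$ satisfies $\mathrm{Tr}(\alpha_i\alpha'_j)=\delta_{ij}$, where $\mathrm{Tr}(x)=\sum_{\ell=0}^{m-1}x^{[\ell]}$. For $a\in\mathbb{F}_{q^m}$ and an ordered basis $\mathcal{B}=\{\beta_0,\dots,\beta_{m-1}\}$, $[a]_{\mathcal{B}}\in\mathbb{F}_q^{1\times m}$ is the row vector of coordinates of $a$ with respect to $\mathcal{B}$; for a vector $v\in\mathbb{F}_{q^m}^m$, $[v]_{\mathcal{B}}\in\mathbb{F}_q^{m\times m}$ is the matrix whose $i$th row is $[v_i]_{\mathcal{B}}$. For an $\mathbb{F}_q$-linear map $T$ on $\mathbb{F}_{q^m}$ and ordered bases $\mathcal{A}=\{\alpha_i\}$, $\mathcal{B}=\{\beta_j\}$, $[T]_{\mathcal{A}}^{\mathcal{B}}$ is the matrix over $\mathbb{F}_q$ with $T(\alpha_i)=\sum_j([T]_{\mathcal{A}}^{\mathcal{B}})_{ij}\beta_j$. A $q$-polynomial is viewed as the linear map given by evaluation. Indices start at 0. *)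

From HB Require Import structures.
From mathcomp Require Import all_boot all_order all_algebra all_field.
Set Implicit Arguments. Unset Strict Implicit. Unset Printing Implicit Defensive.
Import GRing.Theory.
Local Open Scope ring_scope.

(* F = F_q (a finite field, q = #|F|), L = F_{q^m} a finite extension of F. *)
Section Defs.
Variables (F : finFieldType) (L : fieldExtType F).

Definition frobq (i : nat) (x : L) : L := x ^+ (#|F| ^ i).

Definition qpolyev (m : nat) (c : 'I_m -> L) (x : L) : L :=
  \sum_(i < m) c i * frobq i x.

Definition trace (m : nat) (x : L) : L := \sum_(l < m) frobq l x.

Definition normal_tuple (m : nat) (alpha : L) : m.-tuple L :=
  [tuple frobq i alpha | i < m].

Definition coordmx (m : nat) (v : 'I_m -> L) (B : m.-tuple L) : 'M[F]_m :=
  \matrix_(i, j) coord B j (v i).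

(* [T]_A^B : T(alpha_i) = sum_j ([T]_A^B)_{ij} beta_j *)
Definition linmx (m : nat) (T : L -> L) (A B : m.-tuple L) : 'M[F]_m :=
  \matrix_(i, j) coord B j (T (tnth A i)).
End Defs.

From HB Require Import structures.
From mathcomp Require Import all_boot all_order all_algebra all_field.
Local Open Scope ring_scope.
Import GRing.Theory.

Set Implicit Arguments.
Unset Strict Implicit.
Unset Printing Implicit Defensive.

(* Substituting [F_j = f(alpha^[j])] and exchanging sums gives
   [F(a) = sum_k f_k Tr(alpha^[k] a)], using only that the maps [x |-> x^[i]]
   are multiplicative and commute.  Taking [a = alpha'_i], duality collapses
   the sum to [f_i]. *)

Section QPolynomials.
Variables (F : finFieldType) (L : fieldExtType F).

Lemma frobqM (i : nat) (x y : L) : frobq i (x * y) = frobq i x * frobq i y.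
Proof. exact: exprMn. Qed.

Lemma frobqC (i j : nat) (x : L) : frobq i (frobq j x) = frobq j (frobq i x).
Proof. by rewrite /frobq -!exprM mulnC. Qed.

Lemma coordmx_linmxP (m : nat) (v : 'I_m -> L) (T : L -> L)
    (A B : m.-tuple L) :
  basis_of fullv B ->
  coordmx v B = linmx T A B <-> forall i, v i = T (tnth A i).
Proof.
move=> hB; split => [hvT i | hvT]; last by apply/matrixP => i j; rewrite !mxE hvT.
rewrite (coord_basis hB (memvf (v i))) (coord_basis hB (memvf (T _))).
apply: eq_bigr => j _.
by have := congr1 (fun M : 'M[F]_m => M i j) hvT; rewrite !mxE => ->.
Qed.

Lemma eq_qpolyev (m : nat) (c d : 'I_m -> L) :
  c =1 d -> qpolyev c =1 qpolyev d.
Proof. by move=> ecd x; apply: eq_bigr => i _; rewrite ecd. Qed.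

Lemma qpolyev_orbit_trace (m : nat) (c : 'I_m -> L) (alpha a : L) :
  qpolyev (fun j : 'I_m => qpolyev c (frobq j alpha)) a
    = \sum_(k < m) c k * trace m (frobq k alpha * a).
Proof.
rewrite /qpolyev; under eq_bigr => j _ do rewrite mulr_suml.
rewrite exchange_big; apply: eq_bigr => k _.
rewrite /trace mulr_sumr; apply: eq_bigr => j _.
by rewrite frobqM frobqC mulrA.
Qed.

Lemma sum_dual_trace (m : nat) (c : 'I_m -> L) (A A' : m.-tuple L) i :
  (forall k j : 'I_m, trace m (tnth A k * tnth A' j) = (k == j)%:R) ->
  \sum_(k < m) c k * trace m (tnth A k * tnth A' i) = c i.
Proof.
move=> hdual; rewrite (bigD1 i) //= big1 => [|k /negbTE hki];
  by rewrite hdual ?eqxx ?hki ?mulr1 ?mulr0 ?addr0.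
Qed.

End QPolynomials.

Theorem lemma2 (F : finFieldType) (L : fieldExtType F) (m : nat)
  (hm : (0 < m)%N) (hdim : \dim {:L} = m)
  (alpha : L) (hA : basis_of fullv (normal_tuple m alpha))
  (A' : m.-tuple L) (hA' : basis_of fullv A')
  (hdual : forall i j : 'I_m,
     trace m (tnth (normal_tuple m alpha) i * tnth A' j) = (i == j)%:R)
  (B : m.-tuple L) (hB : basis_of fullv B)
  (f : 'I_m -> L) (Fv : 'I_m -> L)
  (hF : coordmx Fv B = linmx (qpolyev f) (normal_tuple m alpha) B) :
  (forall i : 'I_m, f i = qpolyev Fv (tnth A' i)) /\
  (forall Theta : m.-tuple L, basis_of fullv Theta ->
     coordmx f Theta = linmx (qpolyev Fv) A' Theta).
Proof.
have hFv : forall j, Fv j = qpolyev f (frobq j alpha).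
  by move=> j; rewrite ((coordmx_linmxP _ _ _ hB).1 hF) tnth_mktuple.
have hf : forall i, f i = qpolyev Fv (tnth A' i).
  move=> i; rewrite -[LHS](sum_dual_trace f i hdual).
  rewrite [RHS](eq_qpolyev hFv) [RHS]qpolyev_orbit_trace.
  by apply: eq_bigr => k _; rewrite tnth_mktuple.
split=> // Theta hTheta.
exact/(coordmx_linmxP _ _ _ hTheta).
Qed.
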